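(* Let $1\le d<n$, let $\underline i_{\max,n-1}:=(n-d)(n-d+1)\cdots(n-1)$ and $\underline i_{\max}:=(n-d+1)(n-d+2)\cdots n$, and let $M=\{\underline i\in I(d,n)\mid \ell(\underline i)=\ell(\underline i_{\max,n-1})\}$. Then: (i) $\underline i_{\max,n-1}\ge_{lex}\underline j$ for all $\underline j\in M$. (ii) The interval $\{\underline j\in I(d,n)\mid \underline i_{\max,n-1}\le_{lex}\underline j\le_{lex}\underline i_{\max}\}$ with respect to the lexicographic order equals the interval $[\underline i_{\max,n-1},\underline i_{\max}]$ with respect to the Bruhat order, it is totally ordered with respect to the Bruhat order, and its elements are exactly the rows $(n-d)(n-d+1)\cdots(n-d+k-1)(n-d+k+1)\cdots n$ for $k=0,1,\dots,d$ (obtained from $\underline i_{\max}$ by lowering its first $k$ entries by one), which are the first $d+1$ elements (from the top) of the leftmost maximal chain $\mathfrak C_{\mathrm{left}}$.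
   Context: $I(d,n)$ is the set of $d$-element subsets of $\{1,\dots,n\}$ written as increasing sequences $i_1\cdots i_d$; the Bruhat order is $\underline i\le\underline j$ iff $i_k\le j_k$ for all $k$; $\le_{lex}$ is the lexicographic order on such sequences; $\ell(\underline i)=\sum_h(i_h-h)$. $\mathfrak C_{\mathrm{left}}$ is the maximal chain of $I(d,n)$ which is largest in the lexicographic order on concatenated strings $\underline i_r\cdots\underline i_0$; it is obtained from $\underline i_{\max}$ by lowering successively the first, second, ..., $d$-th entry by one, then again the first, second, ..., and so on. *)

From mathcomp Require Import all_boot.
Set Implicit Arguments. Unset Strict Implicit. Unset Printing Implicit Defensive.

Definition inI (d n : nat) (s : seq nat) : bool :=
  [&& size s == d, sorted ltn s & all (fun x => 0 < x <= n) s].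

Definition bruhat (s t : seq nat) : bool := all2 leq s t.

Fixpoint lexle (s t : seq nat) : bool :=
  match s, t with
  | [::], _ => true
  | _ :: _, [::] => false
  | x :: s', y :: t' => (x < y) || ((x == y) && lexle s' t')
  end.

Definition ell (s : seq nat) : nat := \sum_(h < size s) (nth 0 s h - h.+1).

Definition imax (d n : nat) : seq nat := iota (n - d + 1) d.
Definition imaxn1 (d n : nat) : seq nat := iota (n - d) d.
Definition imin (d : nat) : seq nat := iota 1 d.

Definition row (d n k : nat) : seq nat := iota (n - d) k ++ iota (n - d + k + 1) (d - k).

Definition bcovers (d n : nat) (a b : seq nat) : Prop :=
  [/\ bruhat a b, a != b &
      forall x, inI d n x -> bruhat a x -> bruhat x b -> x = a \/ x = b].

Definition max_chain (d n : nat) (c : seq (seq nat)) : Prop :=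
  [/\ c <> [::], all (inI d n) c, head [::] c = imax d n, last [::] c = imin d &
      forall h, h.+1 < size c -> bcovers d n (nth [::] c h.+1) (nth [::] c h)].

Definition left_chain (d n : nat) (c : seq (seq nat)) : Prop :=
  max_chain d n c /\
  forall c', max_chain d n c' -> lexle (flatten c') (flatten c).

From mathcomp Require Import all_boot zify.
Set Implicit Arguments. Unset Strict Implicit. Unset Printing Implicit Defensive.

(* An element of I(d,n) lexicographically above i_{max,n-1} has first entry at
   least n-d, hence, being strictly increasing, dominates i_{max,n-1} entrywise;
   the sequences doing so are exactly the rows, which form a Bruhat chain from
   i_{max,n-1} up to i_max.  As ell is strictly Bruhat-monotone, an element of
   the same length as i_{max,n-1} that is not lexicographically below it is
   i_{max,n-1} itself.  For C_left: everything strictly Bruhat-below row k is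
   lexicographically at most row k+1, and the rows 0..d do start a maximal chain
   (continued greedily down to i_min), so a lex-largest maximal chain must run
   through them. *)

Lemma lexle_refl s : lexle s s.
Proof. by elim: s => //= x s ->; rewrite eqxx orbT. Qed.

Lemma lexle_catl p s t : lexle (p ++ s) (p ++ t) = lexle s t.
Proof. by elim: p => //= x p ->; rewrite ltnn eqxx. Qed.

Lemma lexle_flatten_drop k (s t : seq (seq nat)) : take k s = take k t ->
  lexle (flatten s) (flatten t) = lexle (flatten (drop k s)) (flatten (drop k t)).
Proof.
move=> eq_take; rewrite -{1}(cat_take_drop k s) -{1}(cat_take_drop k t).
by rewrite !flatten_cat eq_take lexle_catl.
Qed.

Lemma lexle_cons_leq x y s t : lexle (x :: s) (y :: t) -> x <= y.
Proof. by case/orP=> [/ltnW | /andP[/eqP -> _]]. Qed.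

Lemma lexle_cat_neq s t A B :
  size s = size t -> lexle s t -> s != t -> lexle (s ++ A) (t ++ B).
Proof.
elim: s t => [|x s IH] [|y t] //= [size_st] /orP[-> // | /andP[/eqP <- le_st]].
by rewrite eqseq_cons eqxx ltnn /= => /(IH _ size_st le_st) ->.
Qed.

Lemma lexle_cat_eq s t A B :
  size s = size t -> lexle t s -> lexle (s ++ A) (t ++ B) -> s = t.
Proof.
elim: s t => [|x s IH] [|y t] //= [size_st].
case/orP=> [lt_yx | /andP[/eqP -> le_ts]] /orP[lt_xy | /andP[/eqP eq_xy le_st]].
- by have := ltn_trans lt_yx lt_xy; rewrite ltnn.
- by move: lt_yx; rewrite eq_xy ltnn.
- by move: lt_xy; rewrite ltnn.
- by rewrite (IH t size_st le_ts le_st).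
Qed.

Lemma bruhat_lexle s t : bruhat s t -> lexle s t.
Proof.
rewrite /bruhat; elim: s t => [|x s IH] [|y t] //= /andP[le_xy /IH ->].
by rewrite andbT orbC -leq_eqVlt.
Qed.

Lemma bruhatP s t :
  reflect (size s = size t /\ forall i, i < size s -> nth 0 s i <= nth 0 t i) (bruhat s t).
Proof.
rewrite /bruhat; apply: (iffP idP).
- elim: s t => [|x s IH] [|y t] //= /andP[le_xy /IH[size_st le_st]].
  by split=> [|[|i]] //=; [rewrite size_st | apply: le_st].
- elim: s t => [|x s IH] [|y t] [//= size_st le_st] /=.
  rewrite (le_st 0) //=; apply: IH; split=> [|i lt_i]; first by case: size_st.
  exact: (le_st i.+1).
Qed.

Lemma bruhat_take k s t : bruhat s t -> bruhat (take k s) (take k t).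
Proof. by rewrite /bruhat; elim: s t k => [|x s IH] [|y t] [|k] //= /andP[-> /IH->]. Qed.

Lemma sorted_ltn_nthD s i j :
  sorted ltn s -> i <= j -> j < size s -> nth 0 s i + (j - i) <= nth 0 s j.
Proof.
move=> /(sortedP 0) lt_s le_ij; elim: j le_ij => [|j IH] le_ij lt_j.
  by rewrite leqn0 in le_ij; rewrite (eqP le_ij) addn0.
case: (ltnP i j.+1) => [lt_ij | ge_ij]; last by have -> : i = j.+1 by [lia]; rewrite subnn addn0.
by have := IH lt_ij (ltnW lt_j); have := lt_s j lt_j; lia.
Qed.

Section Grassmannian.
Variables d n : nat.

Lemma inI_size s : inI d n s -> size s = d.
Proof. by case/and3P=> /eqP. Qed.

Lemma inI_gap s i j : inI d n s -> i <= j -> j < d -> nth 0 s i + (j - i) <= nth 0 s j.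
Proof. by case/and3P=> /eqP <- sorted_s _; apply: sorted_ltn_nthD. Qed.

Lemma inI_range s i : inI d n s -> i < d -> 0 < nth 0 s i <= n.
Proof. by case/and3P=> /eqP <- _ /(all_nthP 0); apply. Qed.

Lemma inI_bounds s i : inI d n s -> i < d -> i < nth 0 s i <= n - d + i.+1.
Proof.
move=> Is lt_id; have /andP[pos_s0 _] := inI_range Is (leq_ltn_trans (leq0n i) lt_id).
have /andP[_ le_last] := inI_range Is (i := d.-1) ltac:(lia).
have := inI_gap Is (leq0n i) lt_id; have := inI_gap Is (i := i) (j := d.-1) ltac:(lia) ltac:(lia).
lia.
Qed.

Lemma ell_lt_bruhat s t : inI d n s -> bruhat s t -> s != t -> ell s < ell t.
Proof.
move=> Is /bruhatP[size_st le_st] ne_st.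
have [h ne_h] : exists h : 'I_(size s), nth 0 s h != nth 0 t h.
  apply/existsP; apply: contraNT ne_st => /existsPn eq_st.
  apply/eqP/(eq_from_nth (x0 := 0)) => // i lt_i.
  exact/eqP/negPn/(eq_st (Ordinal lt_i)).
have /andP[gt_h _] := inI_bounds Is (i := h) ltac:(by rewrite -(inI_size Is)).
have le_h := le_st h (ltn_ord h).
rewrite /ell -size_st (bigD1 h) //= [X in _ < X](bigD1 h) //= -addSn leq_add //; first lia.
by apply: leq_sum => i _; apply: leq_sub2r; apply: le_st.
Qed.

Lemma size_row k : k <= d -> size (row d n k) = d.
Proof. by move=> le_kd; rewrite size_cat !size_iota; lia. Qed.

Lemma nth_row k i : k <= d -> i < d ->
  nth 0 (row d n k) i = if i < k then n - d + i else n - d + i.+1.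
Proof. by move=> le_kd lt_id; rewrite nth_cat size_iota; case: ifP => ?; rewrite nth_iota; lia. Qed.

Lemma row_0 : row d n 0 = imax d n.
Proof. by rewrite /row addn0 subn0. Qed.

Lemma row_d : row d n d = imaxn1 d n.
Proof. by rewrite /row subnn cats0. Qed.

Lemma bruhat_row k k' : k <= k' -> k' <= d -> bruhat (row d n k') (row d n k).
Proof.
move=> le_kk' le_k'd; apply/bruhatP; rewrite !size_row //; last by lia.
by split=> // i lt_id; rewrite !nth_row //; try lia; case: ifP; case: ifP; lia.
Qed.

Lemma row_of_bruhat s : inI d n s -> bruhat (imaxn1 d n) s -> exists2 k, k <= d & s = row d n k.
Proof.
move=> Is /bruhatP[_ ge_s]; rewrite size_iota in ge_s.
pose k := find (fun h => nth 0 s h != n - d + h) (iota 0 d).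
have le_kd : k <= d by rewrite -[X in _ <= X](size_iota 0 d) find_size.
exists k => //; apply: (eq_from_nth (x0 := 0)); first by rewrite size_row // inI_size.
rewrite (inI_size Is) => i lt_id; rewrite nth_row //.
case: ltnP => [lt_ik | ge_ik].
  by have := before_find 0 lt_ik; rewrite nth_iota //= add0n => /negbFE/eqP.
have lt_kd : k < d by lia.
have : has (fun h => nth 0 s h != n - d + h) (iota 0 d) by rewrite has_find size_iota.
move/(nth_find 0); rewrite -/k nth_iota // add0n => ne_k.
have := ge_s k lt_kd; rewrite /imaxn1 nth_iota // => ge_k.
have := inI_bounds Is lt_id; have := inI_gap Is ge_ik lt_id; lia.
Qed.

Lemma bruhat_interval_rows s : inI d n s ->
  bruhat (imaxn1 d n) s && bruhat s (imax d n) <-> exists2 k, k <= d & s = row d n k.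
Proof.
move=> Is; split=> [/andP[/(row_of_bruhat Is) //] | [k le_kd ->]].
by rewrite -row_d -row_0 !bruhat_row.
Qed.

Lemma bruhat_imaxn1 s : inI d n s -> n - d <= nth 0 s 0 -> bruhat (imaxn1 d n) s.
Proof.
move=> Is ge_s0; apply/bruhatP; rewrite size_iota (inI_size Is); split=> // i lt_id.
by rewrite nth_iota //; have := inI_gap Is (leq0n i) lt_id; lia.
Qed.

Lemma lexle_imaxn1_head s : 0 < d -> inI d n s -> lexle (imaxn1 d n) s -> n - d <= nth 0 s 0.
Proof.
move=> d_gt0; case: s => [|x s] Is; first by rewrite -(inI_size Is) in d_gt0.
by rewrite /imaxn1; case: (d) d_gt0 => // d' _ /lexle_cons_leq.
Qed.

Lemma lex_interval_rows s : 0 < d -> inI d n s ->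
  lexle (imaxn1 d n) s && lexle s (imax d n) <-> exists2 k, k <= d & s = row d n k.
Proof.
move=> d_gt0 Is.
split=> [/andP[/(lexle_imaxn1_head d_gt0 Is) ge_s0 _] | /(bruhat_interval_rows Is)].
  exact/(row_of_bruhat Is)/bruhat_imaxn1.
by case/andP=> /bruhat_lexle -> /bruhat_lexle.
Qed.

Hypothesis lt_dn : d < n.

Lemma row_inI k : k <= d -> inI d n (row d n k).
Proof.
move=> le_kd; apply/and3P; split; first by rewrite size_row.
  apply/(sortedP 0) => i; rewrite size_row // => lt_i.
  by rewrite !nth_row //; try lia; case: ifP; case: ifP; lia.
apply/(all_nthP 0) => i; rewrite size_row // => lt_id.
by rewrite nth_row //; case: ifP; lia.
Qed.

Lemma lexle_imaxn1_of_ell s : 0 < d -> inI d n s -> ell s = ell (imaxn1 d n) ->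
  lexle s (imaxn1 d n).
Proof.
move=> d_gt0 Is ell_s; case: (ltnP (nth 0 s 0) (n - d)) => [lt_s0 | ge_s0].
  case: s Is {ell_s} lt_s0 => [|x s] Is; first by rewrite -(inI_size Is) in d_gt0.
  by rewrite /imaxn1; case: (d) d_gt0 => //= d' _ ->.
case: (imaxn1 d n =P s) => [-> | /eqP ne_s]; first exact: lexle_refl.
have := ell_lt_bruhat (row_inI (leqnn d)); rewrite row_d.
by move=> /(_ s (bruhat_imaxn1 Is ge_s0) ne_s); rewrite ell_s ltnn.
Qed.

End Grassmannian.

Definition lower (h : nat) (s : seq nat) : seq nat := set_nth 0 s h (nth 0 s h).-1.

Definition lowerable (h : nat) (s : seq nat) : bool :=
  (h < size s) && ((if h is h'.+1 then nth 0 s h' else 0).+1 < nth 0 s h).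

Definition lower_first (s : seq nat) : seq nat :=
  lower (find (lowerable^~ s) (iota 0 (size s))) s.

(* Each step lowers ell by exactly one, so ell s steps reach i_min. *)
Definition descent (s : seq nat) : seq (seq nat) := traject lower_first s (ell s).+1.

Lemma nth_lower h s i : nth 0 (lower h s) i = if i == h then (nth 0 s h).-1 else nth 0 s i.
Proof. by rewrite nth_set_nth /=; case: eqP => // ->. Qed.

Lemma size_lower h s : h < size s -> size (lower h s) = size s.
Proof. by rewrite size_set_nth => /maxn_idPr. Qed.

Lemma lowerable_bounds h s : lowerable h s ->
  [/\ h < size s, 1 < nth 0 s h & forall i, h = i.+1 -> (nth 0 s i).+1 < nth 0 s h].
Proof. by case/andP; case: h => [|h] lt_h lt_sh; split=> // [|i [<-]] //; lia. Qed.

Lemma bruhat_lower h s : h < size s -> bruhat (lower h s) s.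
Proof.
move=> lt_h; apply/bruhatP; rewrite size_lower //; split=> // i _.
by rewrite nth_lower; case: eqP => [-> | _]; rewrite ?leq_pred.
Qed.

Section Descent.
Variables d n : nat.

Lemma lower_inI h s : inI d n s -> lowerable h s -> inI d n (lower h s).
Proof.
move=> Is /lowerable_bounds[lt_h gt1 gap_h]; have size_s := inI_size Is.
apply/and3P; split; first by rewrite size_lower // size_s.
  apply/(sortedP 0) => i; rewrite size_lower // size_s => lt_i; rewrite !nth_lower.
  have := inI_gap Is (leqnSn i) lt_i.
  case: (i =P h) => [-> | _]; first by rewrite gtn_eqF //; lia.
  case: (i.+1 =P h) => [eq_h | _]; last lia.
  by have := gap_h i (esym eq_h); rewrite -eq_h; lia.
apply/(all_nthP 0) => i; rewrite size_lower // size_s => lt_id; rewrite nth_lower.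
by move: gt1; have := inI_range Is lt_id; case: eqP => [<- | _]; lia.
Qed.

Lemma lower_cover h s : inI d n s -> lowerable h s -> bcovers d n (lower h s) s.
Proof.
move=> Is low_h; have [lt_h gt1 _] := lowerable_bounds low_h.
split; first exact: bruhat_lower.
  by apply/eqP => /(congr1 (nth 0 ^~ h)); rewrite /= nth_lower eqxx; lia.
move=> z Iz /bruhatP[_ ge_z] /bruhatP[_ le_z].
have size_z := inI_size Iz; have size_s := inI_size Is.
rewrite size_lower // size_s in ge_z; rewrite size_z in le_z.
have eq_off i : i != h -> nth 0 z i = nth 0 s i.
  move=> /negbTE ne_ih; case: (ltnP i d) => [lt_id | ge_id].
    by have := ge_z i lt_id; have := le_z i lt_id; rewrite nth_lower ne_ih; lia.
  by rewrite !nth_default ?size_z ?size_s.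
have := ge_z h; have := le_z h; rewrite nth_lower eqxx -size_s.
move=> /(_ lt_h) le_h /(_ lt_h) ge_h.
case: (nth 0 z h =P nth 0 s h) => [eq_h | ne_h]; [right | left].
  apply: (eq_from_nth (x0 := 0)) => [|i _]; first by rewrite size_z size_s.
  by case: (i =P h) => [-> | /eqP /eq_off].
apply: (eq_from_nth (x0 := 0)) => [|i _]; first by rewrite size_lower // size_z size_s.
by rewrite nth_lower; case: (i =P h) => [-> | /eqP /eq_off //]; lia.
Qed.

Lemma ell_lower h s : inI d n s -> lowerable h s -> (ell (lower h s)).+1 = ell s.
Proof.
move=> Is /lowerable_bounds[lt_h gt1 gap_h].
(* The lowered entry stays above h.+1, so the truncated subtraction in ell drops by one. *)
have gt_h : h.+1 < nth 0 s h.
  case: h lt_h gt1 gap_h => [|i] // lt_h _ /(_ i erefl).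
  by have := inI_bounds Is (i := i) ltac:(rewrite -(inI_size Is); lia); lia.
rewrite /ell size_lower // (bigD1 (Ordinal lt_h)) //= [RHS](bigD1 (Ordinal lt_h)) //=.
rewrite nth_lower eqxx.
rewrite (eq_bigr (fun i : 'I_(size s) => nth 0 s i - i.+1)) => [|i ne_ih].
  by rewrite -addSn; congr (_ + _); lia.
by rewrite nth_lower; case: eqP => // eq_ih; case/eqP: ne_ih; apply: val_inj.
Qed.

Lemma imin_of_no_lowerable s : inI d n s -> (forall h, h < d -> ~~ lowerable h s) -> s = imin d.
Proof.
move=> Is no_low; have size_s := inI_size Is.
apply: (eq_from_nth (x0 := 0)); first by rewrite size_s size_iota.
rewrite size_s => i lt_id; rewrite nth_iota // add1n.
elim: i lt_id => [|i IH] lt_id.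
  by have := no_low 0 lt_id; rewrite /lowerable size_s lt_id /=; have := inI_bounds Is lt_id; lia.
have := no_low i.+1 lt_id; rewrite /lowerable size_s lt_id /=.
by have := IH (ltnW lt_id); have := inI_gap Is (leqnSn i) lt_id; lia.
Qed.

Lemma ell_imin : ell (imin d) = 0.
Proof. by rewrite /ell size_iota; apply: big1 => i _; rewrite nth_iota // add1n subnn. Qed.

Lemma ell_eq0 s : inI d n s -> ell s = 0 -> s = imin d.
Proof.
move=> Is /eqP; rewrite /ell sum_nat_eq0 => /forallP ell0.
have size_s := inI_size Is.
apply: (eq_from_nth (x0 := 0)) => [|i lt_i]; first by rewrite size_s size_iota.
have := ell0 (Ordinal lt_i); have := inI_bounds Is (i := i) ltac:(by rewrite -size_s).
by rewrite nth_iota -?size_s //=; lia.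
Qed.

Lemma lower_first_lowerable s : inI d n s -> s != imin d ->
  lowerable (find (lowerable^~ s) (iota 0 (size s))) s.
Proof.
move=> Is ne_s; have has_low : has (lowerable^~ s) (iota 0 (size s)).
  apply: contraNT ne_s => /hasPn no_low; apply/eqP/imin_of_no_lowerable => // h lt_h.
  by apply: no_low; rewrite mem_iota (inI_size Is).
have := nth_find 0 has_low; rewrite nth_iota //.
by rewrite -[X in _ < X](size_iota 0) -has_find.
Qed.

Lemma lower_first_step s : inI d n s -> 0 < ell s ->
  [/\ inI d n (lower_first s), bcovers d n (lower_first s) s & (ell (lower_first s)).+1 = ell s].
Proof.
move=> Is ell_gt0; have ne_s : s != imin d by apply: contraTneq ell_gt0 => ->; rewrite ell_imin.
have low := lower_first_lowerable Is ne_s.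
by split; [apply: lower_inI | apply: lower_cover | apply: ell_lower].
Qed.

Lemma iter_lower_first m s : inI d n s -> m <= ell s ->
  inI d n (iter m lower_first s) /\ ell (iter m lower_first s) = ell s - m.
Proof.
move=> Is; elim: m => [|m IH] le_m; first by rewrite subn0.
have [Im ell_m] := IH (ltnW le_m).
have [I' _ ell'] := lower_first_step Im ltac:(rewrite ell_m; lia).
by rewrite iterS; split=> //; lia.
Qed.

Lemma descent_chain s : inI d n s ->
  [/\ all (inI d n) (descent s), last s (descent s) = imin d &
      forall h, h.+1 < size (descent s) ->
        bcovers d n (nth [::] (descent s) h.+1) (nth [::] (descent s) h)].
Proof.
move=> Is; rewrite /descent size_traject; split.
- apply/allP => x /trajectP[m lt_m ->].
  by have [] := iter_lower_first Is (ltnSE lt_m).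
- rewrite trajectS /= last_traject; have [Im ell_m] := iter_lower_first Is (leqnn (ell s)).
  by apply: ell_eq0; rewrite // ell_m subnn.
move=> h lt_h; have le_h : h <= ell s := ltnW lt_h.
rewrite !(set_nth_default s) ?nth_traject ?size_traject //.
have [Ih ell_h] := iter_lower_first Is le_h.
by have [] := lower_first_step Ih ltac:(rewrite ell_h; lia).
Qed.

End Descent.

Section LeftChain.
Variables d n : nat.
Hypothesis lt_dn : d < n.

Lemma lower_row k : k < d -> lowerable k (row d n k) /\ lower k (row d n k) = row d n k.+1.
Proof.
move=> lt_kd; have le_kd := ltnW lt_kd; split.
  rewrite /lowerable size_row // lt_kd /=.
  by case: k lt_kd le_kd => [|k] lt_kd le_kd; rewrite !nth_row ?ltnn ?ltnSn //; lia.
apply: (eq_from_nth (x0 := 0)) => [|i]; rewrite size_lower ?size_row //; try lia.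
move=> lt_id; rewrite nth_lower !nth_row //; try lia.
case: (i =P k) => [-> | ne_ik]; first by rewrite ltnn ltnSn addnS.
by case: ifP; case: ifP; lia.
Qed.

Definition rows_chain := mkseq (row d n) d ++ descent (row d n d).

Lemma size_rows_chain : d < size rows_chain.
Proof. by rewrite size_cat size_mkseq /descent size_traject addnS ltnS leq_addr. Qed.

Lemma nth_rows_chain k : k <= d -> nth [::] rows_chain k = row d n k.
Proof.
move=> le_kd; rewrite nth_cat size_mkseq; case: ltnP => [lt_kd | ge_kd].
  by rewrite nth_mkseq.
by have -> : k = d by [lia]; rewrite subnn /descent trajectS.
Qed.

Lemma rows_chain_max : max_chain d n rows_chain.
Proof.
have [Idesc last_desc cov_desc] := descent_chain (row_inI lt_dn (leqnn d)).
split.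
- by move=> c0; have := size_rows_chain; rewrite c0.
- rewrite all_cat Idesc andbT; apply/allP => x /mapP[k]; rewrite mem_iota => /andP[_ lt_kd] ->.
  exact: row_inI (ltnW lt_kd).
- by rewrite -nth0 nth_rows_chain // row_0.
- by rewrite last_cat -last_desc /descent trajectS.
move=> h lt_h; case: (ltnP h d) => [lt_hd | ge_hd].
  rewrite !nth_rows_chain // ?(ltnW lt_hd) //; have [low_h <-] := lower_row lt_hd.
  exact: lower_cover (row_inI lt_dn (ltnW lt_hd)) low_h.
move: lt_h; rewrite size_cat !nth_cat size_mkseq.
rewrite (leq_gtF ge_hd) (leq_gtF (leqW ge_hd)) subSn //.
by move=> lt_h; apply: cov_desc; lia.
Qed.

Lemma lexle_row_succ z k : inI d n z -> k < d -> bruhat z (row d n k) -> z != row d n k ->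
  lexle z (row d n k.+1).
Proof.
move=> Iz lt_kd le_z ne_z; have le_kd := ltnW lt_kd; have /bruhatP[_ le_zi] := le_z.
have size_z := inI_size Iz; rewrite size_z in le_zi.
have := le_zi k lt_kd; rewrite nth_row ?ltnn // => le_zk.
case: (leqP (nth 0 z k) (n - d + k)) => [le_zk' | gt_zk].
  apply: bruhat_lexle; apply/bruhatP; rewrite size_row // size_z; split=> // i lt_id.
  have := le_zi i lt_id; rewrite !nth_row //.
  case: (i =P k) => [-> | ne_ik]; first by rewrite ltnn ltnSn.
  by case: ifP; case: ifP; lia.
have drop_z : drop k z = drop k (row d n k).
  apply: (eq_from_nth (x0 := 0)) => [|i]; rewrite !size_drop ?size_row ?size_z // => lt_i.
  rewrite !nth_drop nth_row ?ltnNge ?leq_addr /=; try lia.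
  have := inI_gap Iz (leq_addr i k) ltac:(lia).
  by have := inI_bounds Iz (i := k + i) ltac:(lia); lia.
have take_z : take k z != take k (row d n k).
  by apply: contra_neq ne_z => eq_take; rewrite -(cat_take_drop k z) eq_take drop_z cat_take_drop.
have take_row : take k (row d n k.+1) = take k (row d n k).
  apply: (eq_from_nth (x0 := 0)) => [|i]; rewrite !size_takel ?size_row //; try lia.
  by move=> lt_ik; rewrite !nth_take // !nth_row //; try lia; rewrite lt_ik ltnS ltnW.
rewrite -(cat_take_drop k z) -(cat_take_drop k (row d n k.+1)) take_row.
apply: lexle_cat_neq => //; first by rewrite !size_takel ?size_row ?size_z //; lia.
exact/bruhat_lexle/bruhat_take.
Qed.

Lemma left_chain_rows c : left_chain d n c -> forall k, k <= d -> nth [::] c k = row d n k.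
Proof.
case=> [[c_nil Ic head_c last_c cov_c] lex_c].
suff prefix k : k <= d -> k < size c /\ take k.+1 c = take k.+1 rows_chain.
  move=> k le_kd; have [lt_k /(congr1 (nth [::] ^~ k))] := prefix k le_kd.
  by rewrite /= !nth_take // nth_rows_chain.
have size_rc := size_rows_chain.
elim: k => [|k IH] le_kd.
  have size_c : 0 < size c by rewrite lt0n size_eq0; apply/eqP.
  split=> //; rewrite !(take_nth [::]) ?take0 ?nth_rows_chain //; last lia.
  by rewrite nth0 head_c row_0.
have [lt_k take_eq] := IH (ltnW le_kd).
have nth_k : nth [::] c k = row d n k.
  by have := congr1 (nth [::] ^~ k) take_eq; rewrite /= !nth_take // nth_rows_chain // ltnW.
have lt_k1 : k.+1 < size c.
  rewrite ltn_neqAle lt_k andbT; apply/eqP => size_c.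
  move: last_c; rewrite -(nth_last [::]) -size_c /= nth_k => /(congr1 (nth 0 ^~ d.-1)) /=.
  by rewrite nth_row ?nth_iota; try lia; case: ifP; lia.
set z := nth [::] c k.+1.
have Iz : inI d n z by apply: (all_nthP [::] Ic).
have [le_z ne_z _] := cov_c k lt_k1; rewrite nth_k -/z in le_z ne_z.
have z_row : row d n k.+1 = z.
  apply: (lexle_cat_eq (A := flatten (drop k.+2 rows_chain)) (B := flatten (drop k.+2 c))).
  - by rewrite size_row // (inI_size Iz).
  - exact: lexle_row_succ.
  have := lex_c _ rows_chain_max; rewrite (lexle_flatten_drop (esym take_eq)).
  by rewrite (drop_nth [::] lt_k1) (drop_nth [::] (leq_ltn_trans le_kd size_rc)) nth_rows_chain.
split=> //.
rewrite (take_nth [::] lt_k1) (take_nth [::] (leq_ltn_trans le_kd size_rc)).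
by rewrite take_eq nth_rows_chain // z_row.
Qed.

End LeftChain.

Theorem lemma2p7 (d n : nat) (hd1 : 1 <= d) (hdn : d < n) :
  (* (i) *)
  (forall j, inI d n j -> ell j = ell (imaxn1 d n) -> lexle j (imaxn1 d n)) /\
  (* (ii) lex interval = Bruhat interval *)
  (forall j, inI d n j ->
     (lexle (imaxn1 d n) j && lexle j (imax d n)) =
     (bruhat (imaxn1 d n) j && bruhat j (imax d n))) /\
  (* totally ordered for Bruhat *)
  (forall j j', inI d n j -> inI d n j' ->
     lexle (imaxn1 d n) j && lexle j (imax d n) ->
     lexle (imaxn1 d n) j' && lexle j' (imax d n) ->
     bruhat j j' || bruhat j' j) /\
  (* its elements are exactly the rows k = 0..d *)
  (forall j, inI d n j ->
     (lexle (imaxn1 d n) j && lexle j (imax d n)) <->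
     (exists2 k, k <= d & j = row d n k)) /\
  (* which are the first d+1 elements of C_left *)
  (forall c, left_chain d n c -> forall k, k <= d -> nth [::] c k = row d n k).
Proof.
split; first by move=> j; apply: lexle_imaxn1_of_ell.
split.
  move=> j Ij; apply/idP/idP.
    by move/(lex_interval_rows hd1 Ij)/(bruhat_interval_rows Ij).
  by move/(bruhat_interval_rows Ij)/(lex_interval_rows hd1 Ij).
split.
  move=> j j' Ij Ij' /(lex_interval_rows hd1 Ij)[k le_kd ->].
  move=> /(lex_interval_rows hd1 Ij')[k' le_k'd ->].
  case: (leqP k k') => [le_kk' | /ltnW le_k'k]; first by rewrite (bruhat_row n le_kk' le_k'd) orbT.
  by rewrite (bruhat_row n le_k'k le_kd).
split; first by move=> j; apply: lex_interval_rows.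
exact: left_chain_rows.
Qed.
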